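(* Let $\mathfrak{C}$ be a category and $\mathbb{K}$ a field. Then $b(\mathfrak{C}) \cong B(\mathfrak{C}) \cong Y(\mathfrak{C})$ as semilattices.
   Context: A category is a semigroupoid (set with partial associative product) where each $x$ has unique identities $r(x),d(x)$ with $r(x)x=x=xd(x)$ and $xy$ is defined iff $d(x)=r(y)$. Ideals of $\mathfrak{C}$: subsets $\mathfrak{I}$ with $xy,yx\in\mathfrak{I}$ whenever $y\in\mathfrak{I}$ and the product is defined. A $\mathbb{K}$-semigroup is a semigroup with zero with a compatible scalar action of $\mathbb{K}$ ($\alpha(\beta x)=(\alpha\beta)x$, $1x=x$, $\alpha(xy)=(\alpha x)y=x(\alpha y)$, $0x=0$); $\mathbb{K}$-cancellative if $\alpha x=\beta x$, $x\ne 0$ imply $\alpha=\beta$. A projective representation of $\mathfrak{C}$ on a $\mathbb{K}$-cancellative semigroup $S$ is $\Gamma:\mathfrak{C}\to S$ with: if $xy$ defined, $\Gamma(xy)=0\iff\Gamma(x)\Gamma(y)=0$; if undefined, $\Gamma(x)\Gamma(y)=0$; and $\Gamma(x)\Gamma(y)=\Gamma(xy)\rho(x,y)$ with $\rho(x,y)\in\mathbb{K}^*$ whenever $xy$ defined and $\Gamma(xy)\neq0$; $\rho$, extended by $0$ elsewhere on $\mathfrak{C}\times\mathfrak{C}$, is its factor set. $m(\mathfrak{C})$ is the set of factor sets of projective representations of $\mathfrak{C}$ under pointwise multiplication; $\rho\sim\sigma$ iff there is $\nu:\mathfrak{C}\to\mathbb{K}^*$ with $\rho(x,y)=\nu(x)\nu(xy)^{-1}\nu(y)\sigma(x,y)$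 whenever $xy$ is defined; $M(\mathfrak{C})=m(\mathfrak{C})/\sim$ (the Schur multiplier). $m(\mathfrak{C})$ and $M(\mathfrak{C})$ are commutative regular semigroups, hence strong semilattices of abelian groups; $b(\mathfrak{C})$ and $B(\mathfrak{C})$ denote the corresponding semilattices (equivalently, the semilattices of idempotents of $m(\mathfrak{C})$ and $M(\mathfrak{C})$). $Y(\mathfrak{C})$ is the semilattice of ideals of $\mathfrak{C}$ (including $\emptyset$) ordered by inclusion, with union as operation. *)

From HB Require Import structures.
From mathcomp Require Import all_boot all_order all_algebra.
Set Implicit Arguments.
Unset Strict Implicit.
Unset Printing Implicit Defensive.
Import GRing.Theory.
Local Open Scope ring_scope.

Definition is_identity (C : Type) (comp : C -> C -> option C) (e : C) : Prop :=
  forall y, (comp e y <> None -> comp e y = Some y) /\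
            (comp y e <> None -> comp y e = Some y).

Record category := Category {
  cat_car :> Type;
  comp : cat_car -> cat_car -> option cat_car;
  (* partial associativity: (xy)z defined iff x(yz) defined, and then equal *)
  comp_assoc : forall x y z,
    obind (fun xy => comp xy z) (comp x y) = obind (fun yz => comp x yz) (comp y z);
  cat_r : cat_car -> cat_car;
  cat_d : cat_car -> cat_car;
  cat_r_id : forall x, is_identity comp (cat_r x);
  cat_d_id : forall x, is_identity comp (cat_d x);
  cat_r_comp : forall x, comp (cat_r x) x = Some x;
  cat_d_comp : forall x, comp x (cat_d x) = Some x;
  cat_r_uniq : forall x e, is_identity comp e -> comp e x = Some x -> e = cat_r x;
  cat_d_uniq : forall x e, is_identity comp e -> comp x e = Some x -> e = cat_d x;
  comp_defined : forall x y, comp x y <> None <-> cat_d x = cat_r y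
}.

Record KSemigroup (K : fieldType) := KSemigroupMk {
  ks_car :> Type;
  ks_mul : ks_car -> ks_car -> ks_car;
  ks_zero : ks_car;
  ks_act : K -> ks_car -> ks_car;
  ks_mulA : forall x y z, ks_mul x (ks_mul y z) = ks_mul (ks_mul x y) z;
  ks_mul0l : forall x, ks_mul ks_zero x = ks_zero;
  ks_mul0r : forall x, ks_mul x ks_zero = ks_zero;
  ks_actA : forall (a b : K) x, ks_act a (ks_act b x) = ks_act (a * b) x;
  ks_act1 : forall x, ks_act 1 x = x;
  ks_act_mull : forall (a : K) x y, ks_act a (ks_mul x y) = ks_mul (ks_act a x) y;
  ks_act_mulr : forall (a : K) x y, ks_act a (ks_mul x y) = ks_mul x (ks_act a y);
  ks_act0 : forall x, ks_act 0 x = ks_zero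
}.

Definition K_cancellative (K : fieldType) (S : KSemigroup K) : Prop :=
  forall (a b : K) (x : S), ks_act a x = ks_act b x -> x <> ks_zero S -> a = b.

Definition proj_rep (K : fieldType) (C : category) (S : KSemigroup K)
    (G : C -> S) : Prop :=
  (forall x y z, comp x y = Some z ->
      (G z = ks_zero S <-> ks_mul (G x) (G y) = ks_zero S)) /\
  (forall x y, comp x y = None -> ks_mul (G x) (G y) = ks_zero S) /\
  (forall x y z, comp x y = Some z -> G z <> ks_zero S ->
      exists a : K, a != 0 /\ ks_mul (G x) (G y) = ks_act a (G z)).

Definition factor_set_of (K : fieldType) (C : category) (S : KSemigroup K)
    (G : C -> S) (rho : C -> C -> K) : Prop :=
  forall x y,
    (exists z, comp x y = Some z /\ G z <> ks_zero S /\ rho x y != 0 /\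
               ks_mul (G x) (G y) = ks_act (rho x y) (G z)) \/
    ((forall z, comp x y = Some z -> G z = ks_zero S) /\ rho x y = 0).

Definition in_m (K : fieldType) (C : category) (rho : C -> C -> K) : Prop :=
  exists S : KSemigroup K, K_cancellative S /\
    exists G : C -> S, proj_rep G /\ factor_set_of G rho.

Definition fs_mul (K : fieldType) (C : category) (rho sigma : C -> C -> K)
  : C -> C -> K := fun x y => rho x y * sigma x y.

Definition fs_eq (K : fieldType) (C : category) (rho sigma : C -> C -> K) : Prop :=
  forall x y, rho x y = sigma x y.

(* the equivalence ~ defining M(C) = m(C)/~ *)
Definition fs_sim (K : fieldType) (C : category) (rho sigma : C -> C -> K) : Prop :=
  exists nu : C -> K, (forall x, nu x != 0) /\
    forall x y z, comp x y = Some z ->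
      rho x y = nu x * (nu z)^-1 * nu y * sigma x y.

Definition in_b (K : fieldType) (C : category) (rho : C -> C -> K) : Prop :=
  in_m rho /\ fs_eq (fs_mul rho rho) rho.

(* representatives of the idempotents of M(C) = B(C) *)
Definition in_B (K : fieldType) (C : category) (rho : C -> C -> K) : Prop :=
  in_m rho /\ fs_sim (fs_mul rho rho) rho.

Definition is_ideal (C : category) (I : C -> Prop) : Prop :=
  forall x y z, comp x y = Some z -> (I y -> I z) /\ (I x -> I z).

Definition set_union (C : Type) (I J : C -> Prop) : C -> Prop :=
  fun x => I x \/ J x.

Definition set_eq (C : Type) (I J : C -> Prop) : Prop :=
  forall x, I x <-> J x.

(* The carrier of
   the actual semilattice is the quotient of {x | P x} by eq; f induces a
   well-defined bijection of these quotients preserving the operations. *)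
Definition semilattice_iso (A B : Type)
    (PA : A -> Prop) (eqA : A -> A -> Prop) (opA : A -> A -> A)
    (PB : B -> Prop) (eqB : B -> B -> Prop) (opB : B -> B -> B)
    (f : A -> B) : Prop :=
  (forall x y, PA x -> PA y -> PA (opA x y)) /\
  (forall x y, PB x -> PB y -> PB (opB x y)) /\
  (forall x, PA x -> PB (f x)) /\
  (forall x y, PA x -> PA y -> (eqB (f x) (f y) <-> eqA x y)) /\
  (forall z, PB z -> exists x, PA x /\ eqB (f x) z) /\
  (forall x y, PA x -> PA y -> eqB (f (opA x y)) (opB (f x) (f y))).

(* A factor set rho of a projective representation G vanishes exactly at the
   pairs (x, y) with xy undefined or G(xy) = 0, and {z | G z = 0} is an ideal I.
   If rho^2 ~ rho via nu, cancelling rho on its support gives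
   rho(x, y) = nu(x) nu(y) / nu(xy) there; if rho^2 = rho, then rho = 1 there.
   Conversely, every such "coboundary of c off I" is the factor set of
   x |-> c(x) x in the contracted semigroup ((C \ I) x K^* ) u {0}.  So b(C) and
   B(C) are both parametrized by ideals: two of them are cohomologous iff their
   ideals agree, and pointwise products correspond to unions of ideals. *)

From Pilot Require Import Defs.
From mathcomp Require Import all_boot all_order all_algebra.
From mathcomp Require Import ring boolp.
Set Implicit Arguments.
Unset Strict Implicit.
Unset Printing Implicit Defensive.
Import GRing.Theory.
Local Open Scope ring_scope.

(* A bare [comp] would be ssrfun's function composition. *)
Local Notation ccomp := Defs.comp.

Lemma set_eqP (T : Type) (I J : T -> Prop) : set_eq I J <-> I = J.
Proof. by split=> [IJ | ->]; [apply/funext => z; exact/propext |]. Qed.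

Lemma is_ideal_union (C : category) (I J : C -> Prop) :
  is_ideal I -> is_ideal J -> is_ideal (set_union I J).
Proof.
move=> idI idJ x y z xy_z; have [] := idI x y z xy_z; have [] := idJ x y z xy_z.
by rewrite /set_union; tauto.
Qed.

Section ContractedSemigroup.

Variables (K : fieldType) (C : category) (I : C -> Prop).
Hypothesis idealI : is_ideal I.

(* The contracted semigroup ((C \ I) x K^* ) u {0}: [None] is the zero and
   [Some (x, a)] stands for [a x]; [term] normalizes a pair to this form. *)
Definition reduced (p : option (C * K)) : bool :=
  if p is Some (x, a) then ~~ `[< I x >] && (a != 0) else true.

Definition term (x : C) (a : K) : option (C * K) :=
  if `[< I x >] || (a == 0) then None else Some (x, a).

Definition tmul (p q : option (C * K)) : option (C * K) :=
  match p, q with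
  | Some (x, a), Some (y, b) => if ccomp x y is Some z then term z (a * b) else None
  | _, _ => None
  end.

Definition tact (a : K) (p : option (C * K)) : option (C * K) :=
  if p is Some (x, b) then term x (a * b) else None.

Lemma term_reduced x a : reduced (term x a).
Proof. by rewrite /term; case: ifP => //= /negbT /norP[-> ->]. Qed.

Lemma term_of_reduced x a : reduced (Some (x, a)) -> term x a = Some (x, a).
Proof. by rewrite /term /= => /andP[/negbTE -> /negbTE ->]. Qed.

Lemma term0 x : term x 0 = None.
Proof. by rewrite /term eqxx orbT. Qed.

Lemma term_eqNone x a : a != 0 -> term x a = None <-> I x.
Proof.
by move=> /negbTE a_nz; rewrite /term a_nz orbF; split; case: asboolP.
Qed.

Lemma term_inj x : ~ I x -> injective (term x).
Proof.
move=> /asboolF Ix a b; rewrite /term Ix /=.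
by case: eqP => [->|_]; case: eqP => [->|_] // [].
Qed.

Lemma tact_term a x b : tact a (term x b) = term x (a * b).
Proof.
rewrite /term; case: asboolP => //= nIx; case: eqP => [->|_] /=.
  by rewrite mulr0 eqxx.
by rewrite /term (asboolF nIx).
Qed.

Lemma tmul_None p : tmul p None = None.
Proof. by case: p => [[]|]. Qed.

Lemma tmul_terml x a q : tmul (term x a) q = tmul (Some (x, a)) q.
Proof.
case: q => [[y b]|]; last by rewrite !tmul_None.
rewrite /= {1}/term; case: asboolP => [Ix|_] /=.
  case xy: (ccomp x y) => [z|] //; rewrite /term.
  by rewrite (asboolT ((idealI xy).2 Ix)).
case: eqP => [->|_] //=; case: (ccomp x y) => [z|] //.
by rewrite mul0r term0.
Qed.

Lemma tmul_termr p y b : tmul p (term y b) = tmul p (Some (y, b)).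
Proof.
case: p => [[x a]|] //.
rewrite /= {1}/term; case: asboolP => [Iy|_] /=.
  case xy: (ccomp x y) => [z|] //; rewrite /term.
  by rewrite (asboolT ((idealI xy).1 Iy)).
case: eqP => [->|_] //=; case: (ccomp x y) => [z|] //.
by rewrite mulr0 term0.
Qed.

Lemma tmulA p q r : tmul p (tmul q r) = tmul (tmul p q) r.
Proof.
case: p q r => [[x a]|] [[y b]|] [[w c]|] //; rewrite ?tmul_None //.
pose term_abc (v : option C) := if v is Some z then term z (a * b * c) else None.
transitivity (term_abc (obind (fun t => ccomp x t) (ccomp y w))).
  rewrite [tmul (Some (y, b)) _]/tmul /term_abc.
  case: (ccomp y w) => [t|] //; rewrite tmul_termr /=.
  by case: ccomp => // z; rewrite mulrA.
rewrite -comp_assoc [tmul (Some (x, a)) _]/tmul /term_abc.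
by case: (ccomp x y) => [u|] //; rewrite tmul_terml.
Qed.

Lemma tact_tmull a p q : tact a (tmul p q) = tmul (tact a p) q.
Proof.
case: p q => [[x b]|] [[y c]|] //; last by rewrite !tmul_None.
rewrite [tact a (Some _)]/= tmul_terml /=.
by case: ccomp => // z; rewrite tact_term mulrA.
Qed.

Lemma tact_tmulr a p q : tact a (tmul p q) = tmul p (tact a q).
Proof.
case: p q => [[x b]|] [[y c]|] //.
rewrite [tact a (Some _)]/= tmul_termr /=.
by case: ccomp => // z; rewrite tact_term mulrCA.
Qed.

Lemma tmul_reduced p q : reduced (tmul p q).
Proof.
by case: p q => [[x a]|] [[y b]|] //=; case: ccomp => // z; exact: term_reduced.
Qed.

Lemma tact_reduced a p : reduced (tact a p).
Proof. by case: p => [[x b]|] //; exact: term_reduced. Qed.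

Definition reduced_term := {p : option (C * K) | reduced p}.

Definition rmul (p q : reduced_term) : reduced_term :=
  exist _ (tmul (val p) (val q)) (tmul_reduced _ _).
Definition ract (a : K) (p : reduced_term) : reduced_term :=
  exist _ (tact a (val p)) (tact_reduced _ _).
Definition rzero : reduced_term := exist _ None isT.

Lemma rmulA p q r : rmul p (rmul q r) = rmul (rmul p q) r.
Proof. by apply: val_inj; exact: tmulA. Qed.

Lemma rmul0l p : rmul rzero p = rzero.
Proof. exact: val_inj. Qed.

Lemma rmul0r p : rmul p rzero = rzero.
Proof. by apply: val_inj; exact: tmul_None. Qed.

Lemma ractA a b p : ract a (ract b p) = ract (a * b) p.
Proof. by apply: val_inj; case: p => [[[x c]|] _] //=; rewrite tact_term mulrA. Qed.

Lemma ract1 p : ract 1 p = p.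
Proof.
by apply: val_inj; case: p => [[[x c]|] p_red] //=; rewrite mul1r term_of_reduced.
Qed.

Lemma ract_mull a p q : ract a (rmul p q) = rmul (ract a p) q.
Proof. by apply: val_inj; case: p q => [p ?] [q ?]; exact: tact_tmull. Qed.

Lemma ract_mulr a p q : ract a (rmul p q) = rmul p (ract a q).
Proof. by apply: val_inj; case: p q => [p ?] [q ?]; exact: tact_tmulr. Qed.

Lemma ract0 p : ract 0 p = rzero.
Proof. by apply: val_inj; case: p => [[[x c]|] _] //=; rewrite mul0r term0. Qed.

Definition contracted_semigroup : KSemigroup K :=
  KSemigroupMk rmulA rmul0l rmul0r ractA ract1 ract_mull ract_mulr ract0.

Lemma contracted_semigroup_cancellative : K_cancellative contracted_semigroup.
Proof.
move=> a b [[[x c]|] p_red] /(f_equal val) /= eq_ab p_nz; last first.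
  by case: p_nz; exact: val_inj.
have /andP[/asboolPn nIx c_nz] := p_red.
by apply: (mulIf c_nz); apply: (term_inj nIx).
Qed.

End ContractedSemigroup.

Section CoboundaryOffIdeal.

Variables (K : fieldType) (C : category).

Definition coboundary_off (I : C -> Prop) (c : C -> K) (x y : C) : K :=
  if ccomp x y is Some z then (if `[< I z >] then 0 else c x * c y / c z) else 0.

Definition vanishing_ideal (rho : C -> C -> K) (z : C) : Prop :=
  forall x y, ccomp x y = Some z -> rho x y = 0.

Lemma coboundary_off_eq0 I c x y z : (forall t, c t != 0) ->
  ccomp x y = Some z -> coboundary_off I c x y = 0 <-> I z.
Proof.
move=> c_nz xy; rewrite /coboundary_off xy; case: asboolP => // nIz.
by split=> // /eqP; rewrite !mulf_eq0 invr_eq0 !(negbTE (c_nz _)).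
Qed.

Lemma vanishing_ideal_coboundary_off I c :
  (forall t, c t != 0) -> vanishing_ideal (coboundary_off I c) = I.
Proof.
move=> c_nz; apply/funext => z; apply/propext; split=> [van_z | Iz x y xy].
  by apply/(coboundary_off_eq0 _ c_nz (cat_r_comp z)); exact: van_z (cat_r_comp z).
exact/(coboundary_off_eq0 _ c_nz xy).
Qed.

Lemma coboundary_offM I J c d :
  fs_mul (coboundary_off I c) (coboundary_off J d)
  = coboundary_off (set_union I J) (fun t => c t * d t).
Proof.
apply/funext => x; apply/funext => y; rewrite /fs_mul /coboundary_off.
case: ccomp => [z|]; last by rewrite mulr0.
rewrite /set_union; case: asboolP => Iz; case: asboolP => Jz;
  case: asboolP => IJz; rewrite ?mul0r ?mulr0 //; try tauto.
by rewrite !invfM; ring.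
Qed.

Lemma coboundary_off_sim I J c d :
  (forall t, c t != 0) -> (forall t, d t != 0) ->
  fs_sim (coboundary_off I c) (coboundary_off J d) <-> set_eq I J.
Proof.
move=> c_nz d_nz; split=> [[nu [nu_nz sim]] z | IJ].
  have rz := cat_r_comp z.
  rewrite -(coboundary_off_eq0 _ c_nz rz) -(coboundary_off_eq0 _ d_nz rz) (sim _ _ _ rz).
  by split=> [/eqP|->]; rewrite ?mulr0 // !mulf_eq0 invr_eq0 !(negbTE (nu_nz _)) => /eqP.
move/set_eqP: IJ => <-; exists (fun t => c t / d t); split=> [t|x y z xy].
  by rewrite mulf_neq0 ?invr_eq0.
rewrite /coboundary_off xy; case: asboolP => _; first by rewrite mulr0.
by field; rewrite !c_nz !d_nz.
Qed.

End CoboundaryOffIdeal.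

Section CoboundaryOffRepresentation.

Variables (K : fieldType) (C : category) (I : C -> Prop) (c : C -> K).
Hypotheses (idealI : is_ideal I) (c_nz : forall t, c t != 0).

Let S := contracted_semigroup K idealI.

Definition term_rep (x : C) : S := exist _ (term I x (c x)) (term_reduced I x (c x)).

Lemma contracted_eq0 (p : S) : p = ks_zero S <-> val p = None.
Proof. by split=> [-> // | p0]; apply: val_inj. Qed.

Lemma term_rep_eq0 z : term_rep z = ks_zero S <-> I z.
Proof. by rewrite contracted_eq0; exact: term_eqNone. Qed.

Lemma term_rep_mul x y :
  val (ks_mul (term_rep x) (term_rep y))
  = if ccomp x y is Some z then term I z (c x * c y) else None.
Proof. by rewrite /= tmul_terml // tmul_termr. Qed.

Lemma term_rep_mul_act x y z : ccomp x y = Some z ->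
  ks_mul (term_rep x) (term_rep y) = ks_act (c x * c y / c z) (term_rep z).
Proof. by move=> xy; apply: val_inj; rewrite term_rep_mul xy /= tact_term divfK. Qed.

Lemma term_rep_proj_rep : proj_rep term_rep.
Proof.
split; [|split] => [x y z xy | x y xy | x y z xy _].
- by rewrite term_rep_eq0 contracted_eq0 term_rep_mul xy term_eqNone ?mulf_neq0.
- by apply/contracted_eq0; rewrite term_rep_mul xy.
- exists (c x * c y / c z); split; last exact: term_rep_mul_act.
  by rewrite !mulf_neq0 ?invr_eq0.
Qed.

Lemma term_rep_factor_set : factor_set_of term_rep (coboundary_off I c).
Proof.
move=> x y; rewrite /coboundary_off; case xy: (ccomp x y) => [z|]; last by right.
case: asboolP => Iz; first by right; split=> // _ [<-]; exact/term_rep_eq0.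
left; exists z; split=> //; split; first by move/term_rep_eq0.
by split; [rewrite !mulf_neq0 ?invr_eq0 | exact: term_rep_mul_act].
Qed.

Lemma in_m_coboundary_off : in_m (coboundary_off I c).
Proof.
exists S; split; first exact: contracted_semigroup_cancellative.
by exists term_rep; split; [exact: term_rep_proj_rep | exact: term_rep_factor_set].
Qed.

End CoboundaryOffRepresentation.

Section FactorSets.

Variables (K : fieldType) (C : category).
Implicit Types rho sigma : C -> C -> K.

(* The ideal is the zero set of the representation. *)
Lemma in_m_coboundary_offP rho c : in_m rho ->
  (forall x y z, ccomp x y = Some z -> rho x y != 0 -> rho x y = c x * c y / c z) ->
  exists2 I, is_ideal I & rho = coboundary_off I c.
Proof.
move=> [S [_ [G [[G_mul0 _] factor_set]]]] rho_cob.
exists (fun z => G z = ks_zero S).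
  move=> x y z xy; rewrite !(G_mul0 _ _ _ xy).
  by split=> ->; rewrite ?ks_mul0l ?ks_mul0r.
apply/funext => x; apply/funext => y; rewrite /coboundary_off.
case: (factor_set x y) => [[z [xy [Gz_nz [rho_nz _]]]] | [G0 ->]].
  by rewrite xy asboolF //; exact: rho_cob.
by case xy: ccomp => [z|] //; rewrite asboolT // G0.
Qed.

Lemma in_BP rho : in_B rho <->
  exists I c, [/\ is_ideal I, forall t, c t != 0 & rho = coboundary_off I c].
Proof.
split=> [[rho_m [nu [nu_nz sim]]] | [I [c [idealI c_nz ->]]]].
  have [|I idealI ->] := in_m_coboundary_offP (c := nu) rho_m; last by exists I, nu.
  move=> x y z xy rho_nz; apply: (mulIf rho_nz).
  by rewrite -[_ * rho x y]/(fs_mul rho rho x y) (sim _ _ _ xy) [nu x / _ * _]mulrAC.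
split; first exact: in_m_coboundary_off.
exists c; split=> // x y z xy; rewrite /fs_mul /coboundary_off xy.
by case: asboolP => _; rewrite ?mulr0 // [c x / _ * _]mulrAC.
Qed.

Lemma in_bP rho : in_b rho <->
  exists2 I, is_ideal I & rho = coboundary_off I (fun=> 1).
Proof.
split=> [[rho_m idem] | [I idealI ->]].
  have [|I idealI ->] := in_m_coboundary_offP (c := fun=> 1) rho_m; last by exists I.
  move=> x y z xy rho_nz; apply: (mulIf rho_nz).
  by rewrite [LHS]idem divr1 !mul1r.
split; first by apply: in_m_coboundary_off => // _; exact: oner_neq0.
move=> x y; rewrite /fs_mul /coboundary_off.
by case: ccomp => [z|]; rewrite ?mulr0 //; case: ifP; rewrite ?mulr0 // divr1 !mulr1.
Qed.

Lemma fs_eq_sim rho sigma : fs_eq rho sigma -> fs_sim rho sigma.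
Proof.
move=> eq_rs; exists (fun=> 1); split=> [_ | x y z _]; first exact: oner_neq0.
by rewrite eq_rs divr1 !mul1r.
Qed.

Lemma in_B_mul rho sigma : in_B rho -> in_B sigma -> in_B (fs_mul rho sigma).
Proof.
move=> /in_BP[I [c [idealI c_nz ->]]] /in_BP[J [d [idealJ d_nz ->]]].
apply/in_BP; exists (set_union I J), (fun t => c t * d t).
by rewrite coboundary_offM; split=> // [|t]; [exact: is_ideal_union | exact: mulf_neq0].
Qed.

Lemma in_b_in_B rho : in_b rho -> in_B rho.
Proof.
move=> /in_bP[I idealI ->]; apply/in_BP.
by exists I, (fun=> 1); split=> // _; exact: oner_neq0.
Qed.

Lemma b_B_semilattice_iso :
  semilattice_iso (@in_b K C) (@fs_eq K C) (@fs_mul K C)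
                  (@in_B K C) (@fs_sim K C) (@fs_mul K C) id.
Proof.
have one_nz (t : C) : (1 : K) != 0 := oner_neq0 K.
split; [|split; [exact: in_B_mul | split; [exact: in_b_in_B | split; [|split]]]].
- move=> _ _ /in_bP[I idealI ->] /in_bP[J idealJ ->]; apply/in_bP.
  exists (set_union I J); first exact: is_ideal_union.
  by rewrite coboundary_offM; congr coboundary_off; apply/funext => t; exact: mulr1.
- move=> _ _ /in_bP[I _ ->] /in_bP[J _ ->] /=.
  rewrite coboundary_off_sim // set_eqP.
  by split=> [-> // | /fs_eq_sim /(coboundary_off_sim _ _ one_nz one_nz) /set_eqP].
- move=> _ /in_BP[I [c [idealI c_nz ->]]]; exists (coboundary_off I (fun=> 1)).
  by split; [apply/in_bP; exists I | exact/(coboundary_off_sim _ _ one_nz c_nz)].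
- by move=> rho sigma _ _; exact: fs_eq_sim.
Qed.

Lemma B_Y_semilattice_iso :
  semilattice_iso (@in_B K C) (@fs_sim K C) (@fs_mul K C)
                  (@is_ideal C) (@set_eq C) (@set_union C) (@vanishing_ideal K C).
Proof.
have one_nz (t : C) : (1 : K) != 0 := oner_neq0 K.
split; [exact: in_B_mul | split; [exact: is_ideal_union | split; [|split; [|split]]]].
- by move=> _ /in_BP[I [c [idealI c_nz ->]]]; rewrite vanishing_ideal_coboundary_off.
- move=> _ _ /in_BP[I [c [_ c_nz ->]]] /in_BP[J [d [_ d_nz ->]]].
  by rewrite !vanishing_ideal_coboundary_off // coboundary_off_sim.
- move=> J idealJ; exists (coboundary_off J (fun=> 1)).
  rewrite vanishing_ideal_coboundary_off //; split=> //.
  by apply/in_BP; exists J, (fun=> 1).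
- move=> _ _ /in_BP[I [c [_ c_nz ->]]] /in_BP[J [d [_ d_nz ->]]].
  rewrite coboundary_offM !vanishing_ideal_coboundary_off // => t.
  exact: mulf_neq0.
Qed.

End FactorSets.

Theorem mainTheorem7 (K : fieldType) (C : category) :
  (exists f : (C -> C -> K) -> (C -> C -> K),
      semilattice_iso (@in_b K C) (@fs_eq K C) (@fs_mul K C)
                      (@in_B K C) (@fs_sim K C) (@fs_mul K C) f) /\
  (exists g : (C -> C -> K) -> (C -> Prop),
      semilattice_iso (@in_B K C) (@fs_sim K C) (@fs_mul K C)
                      (@is_ideal C) (@set_eq C) (@set_union C) g).
Proof.
split; first by exists id; exact: b_B_semilattice_iso.
by exists (@vanishing_ideal K C); exact: B_Y_semilattice_iso.
Qed.
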